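(* Let $n\geq 2$. There is a nonempty Zariski open subset $U\subset\mathbb{R}^n$ such that for every $v\in U$, we have $\max_H|H\cap S_nv|=(n-1)!$, where $H$ ranges over all hyperplanes in $\mathbb{R}^n$ (through the origin).
   Context: The symmetric group $S_n$ acts on $\mathbb{R}^n$ by permuting coordinates; $S_nv$ denotes the orbit of $v$. *)

From HB Require Import structures.
From mathcomp Require Import all_boot all_order all_algebra all_fingroup.
From mathcomp Require Import reals.
From mathcomp Require Import mpoly.
Set Implicit Arguments. Unset Strict Implicit. Unset Printing Implicit Defensive.
Import Order.TTheory GRing.Theory Num.Theory.
Local Open Scope ring_scope.

Notation vecR R n := {ffun 'I_n -> R}.

Definition permv (R : Type) (n : nat) (s : {perm 'I_n}) (v : {ffun 'I_n -> R})
  : {ffun 'I_n -> R} := [ffun i => v (s i)].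

(* The orbit S_n v, as a list (possibly with repetitions). *)
Definition orbit_seq (R : Type) (n : nat) (v : {ffun 'I_n -> R}) :=
  [seq permv s v | s : {perm 'I_n}].

Definition in_hyperplane (R : ringType) (n : nat) (a x : {ffun 'I_n -> R}) : bool :=
  \sum_(i < n) a i * x i == 0.

Definition hyp_orbit_card (R : ringType) (n : nat) (a v : {ffun 'I_n -> R}) : nat :=
  size (undup [seq w <- orbit_seq v | in_hyperplane a w]).

(* Zariski open subsets of R^n: complements of common zero sets of a
   family S of polynomials in n variables. *)
Definition zariski_open (R : ringType) (n : nat) (U : {ffun 'I_n -> R} -> Prop) : Prop :=
  exists S : {mpoly R[n]} -> Prop,
    forall v, U v <-> exists p, S p /\ p.@[v] != 0.

(* The points [s v], [s] in a set [T] of permutations, lie on a common hyperplane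
   exactly when the Gram determinant of [T] vanishes at [v]. So [U] is the
   non-vanishing locus of (sum of coordinates) * (Vandermonde) * (the Gram
   determinants of all [T] with more than (n-1)! elements). At a point of [U] no
   hyperplane contains more than (n-1)! orbit points, and one contains exactly the
   (n-1)! points fixing the last coordinate.

   The substance is that this polynomial is not identically zero. By induction on m
   we find [v] such that every equation sum_(j<m) b_j v_(s j) = c with [b]
   nonconstant has at most (m-1)! solutions [s] in S_m. For the step, replace v_m by
   an indeterminate X and compare the two top coefficients in X of a relation with
   polynomial coefficients: either all solutions send one index to m, or they fall
   into at most m classes according to s^-1(m), each mapped by a transposition into
   a level set for m. Hence over R(X) the relation matrix of more than m!
   permutations has full rank, and a nonzero maximal minor survives substituting
   for X any real number outside a finite set. *)

From HB Require Import structures.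
From mathcomp Require Import all_boot all_order all_algebra all_fingroup.
From mathcomp Require Import reals.
From mathcomp Require Import mpoly.
Import Order.TTheory GRing.Theory Num.Theory.
Local Open Scope ring_scope.

Set Implicit Arguments.
Unset Strict Implicit.
Unset Printing Implicit Defensive.

Section PermOn.
Variable T : finType.
Implicit Types (S : {set T}) (s : {perm T}).

Definition nonconstant_on (X : eqType) S (f : T -> X) :=
  [exists x in S, exists y in S, f x != f y].

Lemma constant_onP (X : eqType) S (f : T -> X) :
  reflect {in S &, forall x y, f x = f y} (~~ nonconstant_on S f).
Proof.
rewrite /nonconstant_on; apply: (iffP idP) => [/existsPn h x y xS yS | h].
  by move: (h x); rewrite xS /= => /existsPn /(_ y); rewrite yS negbK => /eqP.
apply/existsPn => x; case: (boolP (x \in S)) => //= xS.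
by apply/existsPn => y; case: (boolP (y \in S)) => //= yS; rewrite (h x y) ?eqxx.
Qed.

Lemma perm_on_setD1 S s x : perm_on S s -> s x = x -> perm_on (S :\ x) s.
Proof.
move=> /subsetP sS sx; apply/subsetP => y sy; rewrite !inE (sS _ sy) andbT.
by apply/eqP => yx; move: sy; rewrite inE yx sx eqxx.
Qed.

Lemma tperm_in_setD1 S x y z : x \in S -> y \in S ->
  (tperm x y z \in S :\ x) = (z \in S :\ y).
Proof.
move=> xS yS; rewrite !inE.
by case: tpermP => [->|->|/eqP zx /eqP zy]; rewrite ?eqxx ?xS ?yS ?zx ?zy // eq_sym.
Qed.

Lemma sum_tperm_setD1 (M : nmodType) S x y (F : T -> M) : x \in S -> y \in S ->
  \sum_(z in S :\ y) F (tperm x y z) = \sum_(z in S :\ x) F z.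
Proof.
move=> xS yS; rewrite [RHS](reindex_perm (tperm x y)) /=.
by apply: eq_bigl => z; rewrite tperm_in_setD1.
Qed.

Lemma sum_perm_on (M : nmodType) S s (F : T -> M) :
  perm_on S s -> \sum_(x in S) F (s x) = \sum_(x in S) F x.
Proof.
move=> sS; rewrite [RHS](reindex_perm s) /=.
by apply: eq_bigl => x; rewrite (perm_closed _ sS).
Qed.

Lemma card_perm_fibers (P : {set {perm T}}) S y : P \subset Sym S -> y \in S ->
  #|P| = (\sum_(x in S) #|[set s in P | s x == y]|)%N.
Proof.
move=> PS yS; rewrite -sum1_card.
transitivity (\sum_(s in P) \sum_(x in S) (s x == y : nat))%N.
  apply: eq_bigr => s sP; have sS : perm_on S s by rewrite -inE (subsetP PS).
  rewrite (bigD1 (s^-1 y)%g) /= ?permKV ?eqxx; last by rewrite -(perm_closed _ sS) permKV.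
  rewrite big1 // => x /andP [_ xy].
  by apply/eqP; rewrite eqb0; apply: contra xy => /eqP <-; rewrite permK.
rewrite exchange_big /=; apply: eq_bigr => x _.
by rewrite -sum1dep_card big_mkcondr.
Qed.

Lemma card_leq_lmul (P Q : {set {perm T}}) g :
  (forall s, s \in P -> (g * s)%g \in Q) -> (#|P| <= #|Q|)%N.
Proof.
move=> PQ; rewrite -(card_imset P (mulgI g)); apply: subset_leq_card.
by apply/subsetP => _ /imsetP [s sP ->]; apply: PQ.
Qed.

Lemma card_perm_fix (x : T) : #|[set s : {perm T} | s x == x]| = #|T|.-1`!.
Proof.
rewrite -(cardsC1 x) -card_Sym; apply: eq_card => s; rewrite !inE.
apply/idP/idP => [/eqP sx | sC]; last by apply/eqP/(out_perm sC); rewrite !inE negbK.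
by apply/subsetP => y; rewrite !inE; apply: contraNneq => ->; rewrite sx.
Qed.

End PermOn.

Section LtOrds.
Variable n : nat.

Definition lt_ords m : {set 'I_n} := [set i : 'I_n | (i < m)%N].

Lemma card_lt_ords m : (m <= n)%N -> #|lt_ords m| = m.
Proof.
move=> mn; have widen_inj : injective (widen_ord mn).
  by move=> i j /(congr1 val) ij; apply: val_inj.
rewrite -[RHS](card_ord m) -(card_imset _ widen_inj).
apply: eq_card => i; rewrite inE; apply/idP/imsetP => [im | [j _ ->]]; last exact: (ltn_ord j).
by exists (Ordinal im) => //; apply: val_inj.
Qed.

Lemma lt_ordsT : lt_ords n = setT.
Proof. by apply/setP => i; rewrite !inE ltn_ord. Qed.

Lemma lt_ordsS_setD1 (i : 'I_n) : lt_ords i = lt_ords i.+1 :\ i.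
Proof. by apply/setP => j; rewrite !inE ltnS ltn_neqAle. Qed.

End LtOrds.

Section LevelSets.
Variables (R : numDomainType) (n : nat).
Implicit Types (b v : 'I_n -> R).

Definition level_set m b v c : {set {perm 'I_n}} :=
  [set s in Sym (lt_ords n m) | \sum_(j in lt_ords n m) b j * v (s j) == c].

Definition small_level_sets m v := forall b c,
  nonconstant_on (lt_ords n m) b -> (#|level_set m b v c| <= m.-1`!)%N.

Lemma small_level_sets1 v : small_level_sets 1 v.
Proof.
move=> b c /existsP [i /andP [i1 /existsP [j /andP [j1]]]].
suff -> : i = j by rewrite eqxx.
by apply: ord_inj; move: i1 j1; rewrite !inE !ltnS !leqn0 => /eqP -> /eqP ->.
Qed.

End LevelSets.

Definition set_var (R : nzRingType) n (v : 'I_n -> R) (i k : 'I_n) : {poly R} :=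
  if k == i then 'X else (v k)%:P.

Definition set_coord (R : Type) n (v : 'I_n -> R) (i : 'I_n) (t : R) (k : 'I_n) : R :=
  if k == i then t else v k.

Lemma horner_set_var (R : comNzRingType) n (v : 'I_n -> R) i t k :
  (set_var v i k).[t] = set_coord v i t k.
Proof. by rewrite /set_var /set_coord; case: eqP; rewrite ?hornerX ?hornerC. Qed.

Section LeadingTerms.
Variables (R : numDomainType) (n m : nat) (v : 'I_n -> R).
Hypotheses (m_gt0 : (0 < m)%N) (mn : (m < n)%N) (small_v : small_level_sets m v).

Implicit Types (s : {perm 'I_n}) (T : {set {perm 'I_n}}) (p : 'I_n).

Let im := Ordinal mn.
Let P := lt_ords n m.+1.

Let im_in_P : im \in P. Proof. by rewrite inE. Qed.

Let lt_ords_m : lt_ords n m = P :\ im. Proof. exact: lt_ordsS_setD1 im. Qed.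

Lemma tperm_mul_Sym_lt_ords s p : s \in Sym P -> p \in P -> s p = im ->
  (tperm p im * s)%g \in Sym (lt_ords n m).
Proof.
rewrite !inE lt_ords_m => sP pP sp; apply: perm_on_setD1; last by rewrite permM tpermR.
apply: perm_onM sP; apply: subset_trans (tperm_on p im) _.
by apply/subsetP => x; rewrite !inE => /orP [] /eqP ->.
Qed.

Lemma card_fiber_leq_fact T p : T \subset Sym P -> p \in P ->
  (#|[set s in T | s p == im]| <= m`!)%N.
Proof.
move=> TP pP; rewrite -(card_lt_ords (ltnW mn)) -card_Sym.
apply: (card_leq_lmul (g := tperm p im)) => s; rewrite inE => /andP [sT /eqP sp].
exact: tperm_mul_Sym_lt_ords (subsetP TP _ sT) pP sp.
Qed.

Lemma card_fiber_leq_level (beta : 'I_n -> R) delta T p :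
  T \subset Sym P -> p \in P -> nonconstant_on (P :\ p) beta ->
  (forall s, s \in T -> s p = im -> \sum_(j in P :\ p) beta j * v (s j) = delta) ->
  (#|[set s in T | s p == im]| <= m.-1`!)%N.
Proof.
move=> TP pP /existsP [i /andP [ip /existsP [j /andP [jp beta_ij]]]] rel.
have in_lt_ords k : k \in P :\ p -> tperm p im k \in lt_ords n m.
  by rewrite lt_ords_m -(tperm_in_setD1 _ pP im_in_P) tpermK.
have nc : nonconstant_on (lt_ords n m) (fun k => beta (tperm p im k)).
  apply/existsP; exists (tperm p im i); rewrite in_lt_ords //=.
  by apply/existsP; exists (tperm p im j); rewrite in_lt_ords //= !tpermK.
apply: leq_trans (small_v delta nc).
apply: (card_leq_lmul (g := tperm p im)) => s; rewrite inE => /andP [sT /eqP sp].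
rewrite inE tperm_mul_Sym_lt_ords ?(subsetP TP) //= lt_ords_m -(rel s sT sp).
rewrite -(sum_tperm_setD1 (fun k => beta k * v (s k)) pP im_in_P).
by apply/eqP/eq_bigr => k _; rewrite permM.
Qed.

Lemma card_leq_fact_of_fixed_fiber (beta : 'I_n -> R) gamma T p0 :
  T \subset Sym P -> nonconstant_on P beta -> p0 \in P -> beta p0 = gamma ->
  ~~ nonconstant_on (P :\ p0) beta ->
  (forall s p, s \in T -> s p = im -> beta p = gamma) ->
  (#|T| <= m`!)%N.
Proof.
move=> TP beta_nc p0P beta_p0 /constant_onP beta_cst rel.
apply: leq_trans (card_fiber_leq_fact TP p0P); apply: subset_leq_card.
apply/subsetP => s sT; rewrite inE sT /=.
have sP : perm_on P s by rewrite -inE (subsetP TP).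
pose q := (s^-1 im)%g; have sq : s q = im by rewrite permKV.
have qP : q \in P by rewrite -(perm_closed _ sP) sq.
have [<- | qp0] := eqVneq q p0; first by rewrite sq.
have beta_q : {in P, forall i, beta i = beta q}.
  move=> i iP; have [-> | ip0] := eqVneq i p0; first by rewrite beta_p0 (rel s q sT sq).
  by apply: beta_cst; rewrite in_setD1 ?ip0 ?qp0.
case/existsP: beta_nc => i /andP [iP /existsP [j /andP [jP]]].
by rewrite !beta_q ?eqxx.
Qed.

Lemma card_leq_fact_of_fibers (beta : 'I_n -> R) gamma (delta : 'I_n -> R) T :
  T \subset Sym P -> nonconstant_on P beta ->
  (forall p, p \in P -> beta p = gamma -> nonconstant_on (P :\ p) beta) ->
  (forall s p, s \in T -> s p = im ->
     beta p = gamma /\ \sum_(j in P :\ p) beta j * v (s j) = delta p) ->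
  (#|T| <= m`!)%N.
Proof.
move=> TP beta_nc beta_ncD1 rel; rewrite (card_perm_fibers TP im_in_P).
have fiber_le p : p \in P ->
    (#|[set s in T | s p == im]| <= (if beta p == gamma then m.-1`! else 0))%N.
  move=> pP; case: eqP => [beta_p | beta_p].
    apply: card_fiber_leq_level (beta_ncD1 p pP beta_p) _ => // s sT sp.
    by rewrite (rel s p sT sp).2.
  rewrite leqn0 cards_eq0; apply/eqP/setP => s; rewrite !inE.
  by apply/andP => -[sT /eqP sp]; apply: beta_p; rewrite (rel s p sT sp).1.
apply: leq_trans (leq_sum _ fiber_le) _.
rewrite -big_mkcondr sum_nat_cond_const -{2}(prednK m_gt0) factS prednK //.
rewrite leq_mul2r; apply/orP; right.
have [q qP beta_q] : exists2 q, q \in P & beta q != gamma.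
  case/existsP: beta_nc => i /andP [iP /existsP [j /andP [jP beta_ij]]].
  have [beta_i | ] := eqVneq (beta i) gamma; last by exists i.
  by exists j; rewrite // -beta_i eq_sym.
have card_Pq : #|P :\ q| = m.
  by move: (cardsD1 q P); rewrite qP card_lt_ords // add1n => -[].
rewrite -card_Pq; apply/subset_leq_card/subsetP => x.
rewrite in_set in_setD1 => /andP [-> /eqP beta_x]; rewrite andbT.
by apply: contraNneq beta_q => <-; rewrite beta_x.
Qed.

Lemma card_leq_fact_of_leading (beta : 'I_n -> R) gamma (delta : 'I_n -> R) T :
  T \subset Sym P -> nonconstant_on P beta ->
  (forall s p, s \in T -> s p = im ->
     beta p = gamma /\ \sum_(j in P :\ p) beta j * v (s j) = delta p) ->
  (#|T| <= m`!)%N.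
Proof.
move=> TP beta_nc rel.
case: (boolP [exists p in P, (beta p == gamma) && ~~ nonconstant_on (P :\ p) beta]).
  case/existsP => p0 /and3P [p0P /eqP beta_p0 beta_cst].
  by apply: card_leq_fact_of_fixed_fiber beta_nc p0P beta_p0 beta_cst _ => // s p sT sp;
    rewrite (rel s p sT sp).1.
move=> /existsPn no_p0; apply: card_leq_fact_of_fibers beta_nc _ rel => // p pP beta_p.
by move: (no_p0 p); rewrite pP beta_p eqxx negbK.
Qed.

Lemma sum_set_var_split (b : 'I_n -> {poly R}) s p : p \in P -> s p = im ->
  \sum_(j in P) b j * set_var v im (s j) =
  b p * 'X + \sum_(j in P :\ p) b j * (v (s j))%:P.
Proof.
move=> pP sp; rewrite (big_setD1 p pP) /= /set_var sp eqxx; congr (_ + _).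
apply: eq_bigr => j; rewrite in_setD1 => /andP [jp _].
by rewrite -sp (inj_eq perm_inj) (negbTE jp).
Qed.

Lemma card_leq_fact_of_poly_relation (b : 'I_n -> {poly R}) c T i0 :
  T \subset Sym P -> i0 \in P -> b i0 = 0 -> [exists j in P, b j != 0] ->
  (forall s, s \in T -> \sum_(j in P) b j * set_var v im (s j) = c) ->
  (#|T| <= m`!)%N.
Proof.
move=> TP i0P b_i0 /existsP [j /andP [jP b_j]] rel.
have P_gt0 : (0 < #|P|)%N by apply/card_gt0P; exists j.
have [jm jmP max_jm] := eq_bigmax_cond (fun k => size (b k)) P_gt0.
pose K := (size (b jm)).-1.
have size_b k : k \in P -> (size (b k) <= K.+1)%N.
  move=> kP; rewrite prednK -?max_jm ?(leq_bigmax_cond _ kP) //.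
  by apply: leq_trans (leq_bigmax_cond _ jP); rewrite size_poly_gt0.
pose beta k := (b k)`_K.
(* For [s p = m] the coefficient of X^(K+1) gives [beta p = c_(K+1)], and that of
   X^K an equation for the other coefficients [beta j]. *)
apply: (card_leq_fact_of_leading (beta := beta) (gamma := c`_K.+1)
          (delta := fun p => c`_K - (b p * 'X)`_K) TP).
  apply/existsP; exists i0; rewrite i0P /=; apply/existsP; exists jm.
  rewrite jmP /beta b_i0 coef0 eq_sym -lead_coefE lead_coef_eq0 /=.
  rewrite -size_poly_gt0 -max_jm; apply: leq_trans (leq_bigmax_cond _ jP).
  by rewrite size_poly_gt0.
move=> s p sT sp; have pP : p \in P.
  by move: (subsetP TP _ sT); rewrite inE => /perm_closed <-; rewrite sp inE.
have coef_c i : c`_i = (b p * 'X)`_i + \sum_(k in P :\ p) (b k)`_i * v (s k).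
  by rewrite -(rel s sT) (sum_set_var_split b pP sp) coefD coef_sum;
     congr (_ + _); apply: eq_bigr => k _; rewrite coefMC.
split; last by rewrite coef_c addrC addKr.
rewrite coef_c coefMX /= big1 ?addr0 // => k /setD1P [_ kP].
by rewrite nth_default ?mul0r ?size_b.
Qed.

End LeadingTerms.

Section FractionKernel.
Variable D : idomainType.
Local Notation tofrac := (@tofrac D).

Lemma tofrac_decomp (x : {fraction D}) :
  exists2 pq : D * D, pq.2 != 0 & x * tofrac pq.2 = tofrac pq.1.
Proof.
elim/quotW: x => r; exists ((frac r).1, (frac r).2); first exact: denom_ratioP.
unlock tofrac; rewrite /= !piE; apply/eqmodP.
rewrite /= FracField.equivfE /FracField.mulf.
by rewrite !numden_Ratio ?mulf_neq0 ?oner_eq0 ?denom_ratioP // !mulr1 mulrC.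
Qed.

Lemma rV_clear_denominators k (z : 'rV[{fraction D}]_k) :
  exists2 d : D, d != 0 & exists w : 'rV[D]_k, map_mx tofrac w = tofrac d *: z.
Proof.
have [pq pq_den pq_eq] := fin_all_exists2 (fun j => tofrac_decomp (z 0 j)).
exists (\prod_j (pq j).2); first by apply/prodf_neq0 => j _.
exists (\row_j ((pq j).1 * \prod_(i | i != j) (pq i).2)).
apply/matrixP => i j; rewrite [i]ord1 !mxE [in RHS](bigD1 j) //= !tofracM -pq_eq.
by rewrite [RHS]mulrC mulrA.
Qed.

Lemma left_kernel_or_minor k p (A : 'M[D]_(k, p)) :
  (exists2 w : 'rV[D]_k, w != 0 & w *m A = 0) \/
  exists f : 'I_k -> 'I_p, \det (colsub f A) != 0.
Proof.
pose AF := map_mx tofrac A.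
have [AF_free | AF_dep] := boolP (row_free AF).
  have AFT_full : row_full AF^T by rewrite /row_full mxrank_tr.
  right; exists (fullrankfun AFT_full).
  have := fullrowsub_unit AFT_full; rewrite unitmxE unitfE.
  have -> : rowsub (fullrankfun AFT_full) AF^T =
            (map_mx tofrac (colsub (fullrankfun AFT_full) A))^T.
    by apply/matrixP => i j; rewrite !mxE.
  by rewrite det_tr det_map_mx tofrac_eq0.
left; rewrite -kermx_eq0 in AF_dep.
have [z /sub_kermxP zAF z_neq0] := rowV0Pn AF_dep.
have [d d_neq0 [w wz]] := rV_clear_denominators z.
have map_inj k' p' : injective (map_mx tofrac : 'M[D]_(k', p') -> _).
  move=> B C /matrixP BC; apply/matrixP => i j.
  by move: (BC i j); rewrite !mxE => /eqP; rewrite tofrac_eq => /eqP.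
exists w.
  apply: contra z_neq0 => /eqP w0; move: wz; rewrite w0 map_mx0 => /esym/eqP.
  by rewrite scaler_eq0 tofrac_eq0 (negbTE d_neq0).
by apply: map_inj; rewrite map_mxM wz -scalemxAl zAF scaler0 map_mx0.
Qed.

End FractionKernel.

Section RelationMatrix.
Variables (D : comPzRingType) (n : nat) (P : {set 'I_n}) (i0 : 'I_n).
Implicit Types (V : 'I_n -> D) (T : {set {perm 'I_n}}).

(* The diagonal block forces left kernel vectors to vanish outside [P]. *)
Definition relation_mx V T : 'M[D]_(n, #|T| + n) :=
  row_mx (\matrix_(j < n, k < #|T|)
            if j == i0 then -1 else if j \in P then V (enum_val k j) else 0)
         (diag_mx (\row_j (j \notin P)%:R)).

Lemma relation_mx_kernel V T (w : 'rV[D]_n) :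
  w *m relation_mx V T = 0 <->
  (forall j, j \notin P -> w 0 j = 0) /\
  (forall s, s \in T -> \sum_(j in P :\ i0) w 0 j * V (s j) = w 0 i0).
Proof.
have colE k : (w *m \matrix_(j < n, k < #|T|) (if j == i0 then -1
                 else if j \in P then V (enum_val k j) else 0)) 0 k =
              \sum_(j in P :\ i0) w 0 j * V (enum_val k j) - w 0 i0.
  rewrite mxE (bigD1 i0) //= mxE eqxx mulrN1 addrC; congr (_ - _).
  rewrite [LHS]big_mkcond [RHS]big_mkcond; apply: eq_bigr => j _; rewrite mxE in_setD1.
  by case: eqP => _ //=; case: (j \in P); rewrite ?mulr0.
rewrite mul_mx_row; split => [/eqP | [w_out w_rel]].
  rewrite row_mx_eq0 => /andP [/eqP /matrixP wA1 /eqP /matrixP wA2]; split.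
    by move=> j jP; move: (wA2 0 j); rewrite mul_mx_diag !mxE jP mulr1.
  move=> s sT; apply/eqP; rewrite -subr_eq0; move: (wA1 0 (enum_rank_in sT s)).
  by rewrite colE mxE enum_rankK_in // => ->.
apply/eqP; rewrite row_mx_eq0; apply/andP; split; apply/eqP/matrixP => i k; rewrite [i]ord1.
  by rewrite colE mxE w_rel ?subrr ?enum_valP.
rewrite mul_mx_diag !mxE; case: (boolP (k \in P)) => kP; first by rewrite mulr0.
by rewrite w_out ?mul0r.
Qed.

End RelationMatrix.

Lemma map_relation_mx (D D' : comPzRingType) (f : {rmorphism D -> D'}) n
    (P : {set 'I_n}) i0 (V : 'I_n -> D) (T : {set {perm 'I_n}}) :
  map_mx f (relation_mx P i0 V T) = relation_mx P i0 (f \o V) T.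
Proof.
rewrite map_row_mx map_diag_mx; congr row_mx; apply/matrixP => j k; rewrite !mxE.
  by case: eqP => _; rewrite ?rmorphN1 //; case: (j \in P); rewrite ?rmorph0.
by rewrite rmorph_nat.
Qed.

Lemma eq_relation_mx (D : comPzRingType) n (P : {set 'I_n}) i0 (V1 V2 : 'I_n -> D) T :
  V1 =1 V2 -> relation_mx P i0 V1 T = relation_mx P i0 V2 T.
Proof.
by move=> V12; apply/matrixP => j k; rewrite !mxE; case: splitP => l _; rewrite !mxE ?V12.
Qed.

Lemma level_set_kernel (R : numDomainType) n k (i0 : 'I_n) (v b : 'I_n -> R) c :
  (i0 < k)%N -> nonconstant_on (lt_ords n k) b ->
  exists2 w : 'rV[R]_n, w != 0 &
    w *m relation_mx (lt_ords n k) i0 v (level_set k b v c) = 0.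
Proof.
set P := lt_ords n k; move=> i0_lt b_nc.
(* As sum_(j in P) v (s j) does not depend on [s], subtracting [b i0] from every
   coefficient gives an equivalent equation whose [i0]-th coefficient vanishes. *)
have i0P : i0 \in P by rewrite inE.
exists (\row_j if j == i0 then c - b i0 * \sum_(l in P) v l
               else if j \in P then b j - b i0 else 0).
  apply/negP => /eqP /matrixP w0.
  have [j jP b_j] : exists2 j, j \in P & b j != b i0.
    case/existsP: b_nc => i /andP [iP /existsP [j /andP [jP b_ij]]].
    have [b_i | ] := eqVneq (b i) (b i0); last by exists i.
    by exists j; rewrite // -b_i eq_sym.
  move: (w0 0 j); rewrite !mxE jP; case: eqP => [ji0 | _]; first by rewrite ji0 eqxx in b_j.
  by move/eqP; rewrite subr_eq0 (negbTE b_j).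
apply/relation_mx_kernel; split => [j jP | s].
  by rewrite mxE (negbTE jP); case: eqP => // ji0; rewrite ji0 i0P in jP.
rewrite inE => /andP [sP /eqP b_s]; rewrite inE in sP.
rewrite mxE eqxx -b_s -(sum_perm_on v sP) mulr_sumr -sumrB (big_setD1 i0 i0P) /=.
rewrite subrr add0r; apply: eq_bigr => j; rewrite in_setD1 => /andP [ji0 jP].
by rewrite mxE (negbTE ji0) jP mulrBl.
Qed.

Section GenericStep.
Variables (R : numDomainType) (n m : nat) (v : 'I_n -> R).
Hypotheses (m_gt0 : (0 < m)%N) (mn : (m < n)%N) (small_v : small_level_sets m v).
Implicit Types (T : {set {perm 'I_n}}).

Let im := Ordinal mn.
Let P := lt_ords n m.+1.
Let im_in_P : im \in P. Proof. by rewrite inE. Qed.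

Lemma relation_mx_minor T : T \subset Sym P -> (m`! < #|T|)%N ->
  exists f : 'I_n -> 'I_(#|T| + n), \det (colsub f (relation_mx P im (set_var v im) T)) != 0.
Proof.
move=> TP T_gt.
have [[w w_neq0 /relation_mx_kernel [w_out w_rel]] | //] :=
  left_kernel_or_minor (relation_mx P im (set_var v im) T).
pose b j := if j == im then 0 else w 0 j.
have b_rel s : s \in T -> \sum_(j in P) b j * set_var v im (s j) = w 0 im.
  move=> sT; rewrite (big_setD1 im im_in_P) /= {1}/b eqxx mul0r add0r -(w_rel s sT).
  by apply: eq_bigr => j; rewrite in_setD1 => /andP [/negbTE jim _]; rewrite /b jim.
have [s sT] : exists s, s \in T by apply/card_gt0P; apply: leq_ltn_trans T_gt.
have b_nz : [exists j in P, b j != 0].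
  apply: contraTT w_neq0 => /existsPn b0; rewrite negbK.
  have b_0 j : j \in P -> b j = 0 by move=> jP; move: (b0 j); rewrite jP negbK => /eqP.
  apply/eqP/matrixP => i j; rewrite [i]ord1 mxE.
  case: (boolP (j \in P)) => jP; last exact: w_out.
  have [-> | jim] := eqVneq j im; last by move: (b_0 j jP); rewrite /b (negbTE jim).
  by rewrite -(b_rel s sT) big1 // => l lP; rewrite b_0 ?mul0r.
suff : (#|T| <= m`!)%N by rewrite leqNgt T_gt.
by apply: (card_leq_fact_of_poly_relation m_gt0 small_v TP im_in_P _ b_nz b_rel);
  rewrite /b eqxx.
Qed.

Lemma small_level_sets_step : exists2 Q : {poly R}, Q != 0 &
  forall t, ~~ root Q t -> small_level_sets m.+1 (set_coord v im t).
Proof.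
pose A T := relation_mx P im (set_var v im) T.
exists (\prod_(T : {set {perm 'I_n}} | (T \subset Sym P) && (m`! < #|T|)%N)
        \prod_(f : {ffun 'I_n -> 'I_(#|T| + n)} | \det (colsub f (A T)) != 0)
        \det (colsub f (A T))).
  by apply/prodf_neq0 => T _; apply/prodf_neq0.
move=> t Qt b c b_nc; rewrite leqNgt; apply/negP => Z_gt.
set Z := level_set _ _ _ _ in Z_gt.
have ZP : Z \subset Sym P by apply/subsetP => s; rewrite inE => /andP [].
have [f det_f] := relation_mx_minor ZP Z_gt.
have [w w_neq0 wA] := level_set_kernel (set_coord v im t) c (ltnSn m : (im < m.+1)%N) b_nc.
move: Qt; rewrite /root horner_prod => /prodf_neq0 /(_ Z); rewrite ZP Z_gt.
rewrite horner_prod => /(_ isT) /prodf_neq0 /(_ (finfun f)).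
rewrite (eq_colsub _ (ffunE f)) det_f => /(_ isT); apply/negP; rewrite negbK.
rewrite -horner_evalE -det_map_mx map_mxsub map_relation_mx.
rewrite (@eq_relation_mx _ _ _ _ _ (set_coord v im t)) => [|k]; last exact: horner_set_var.
by apply/det0P; exists w; rewrite // mulmx_colsub wA; apply/matrixP => i j; rewrite !mxE.
Qed.

End GenericStep.

Lemma poly_nonroot (R : numDomainType) (Q : {poly R}) : Q != 0 -> exists t, ~~ root Q t.
Proof.
move=> Q_neq0; pose rs : seq R := [seq i%:R | i <- iota 0 (size Q)].
have rs_uniq : uniq rs.
  by rewrite map_inj_uniq ?iota_uniq // => i j /eqP; rewrite eqr_nat => /eqP.
case: (boolP (all (root Q) rs)) => [rs_roots | /allPn [t _ Qt]]; last by exists t.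
by have := max_poly_roots Q_neq0 rs_roots rs_uniq; rewrite size_map size_iota ltnn.
Qed.

Lemma exists_small_level_sets (R : numDomainType) n m : (0 < m <= n)%N ->
  exists v : 'I_n -> R, [/\ small_level_sets m v, {in lt_ords n m &, injective v}
                           & \sum_(i in lt_ords n m) v i != 0].
Proof.
elim: m => // m IH /andP [_ mn].
case: (posnP m) mn => [-> | m_gt0] mn.
  exists (fun=> 1); split; first exact: small_level_sets1.
    move=> i j; rewrite !inE !ltnS !leqn0 => /eqP i0 /eqP j0 _.
    by apply: ord_inj; rewrite i0 j0.
  by rewrite sumr_const card_lt_ords // oner_eq0.
have [v [small_v inj_v sum_v]] := IH (introT andP (conj m_gt0 (ltnW mn))).
set im := Ordinal mn; set S := \sum_(i in lt_ords n m) v i.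
have [Q Q_neq0 Q_step] := small_level_sets_step m_gt0 mn small_v.
have prod_neq0 : \prod_(k in lt_ords n m) ('X - (v k)%:P) != 0.
  by apply/prodf_neq0 => k _; rewrite polyXsubC_eq0.
have XS_neq0 : 'X - (- S)%:P != 0 by rewrite polyXsubC_eq0.
have [t] := poly_nonroot (mulf_neq0 (mulf_neq0 Q_neq0 prod_neq0) XS_neq0).
rewrite !rootM !negb_or => /andP [/andP [Qt]].
rewrite root_XsubC /root horner_prod => /prodf_neq0 t_v t_S.
have lt_m k : k \in lt_ords n m.+1 -> k != im -> k \in lt_ords n m.
  by move=> kP kim; rewrite (lt_ordsS_setD1 im) in_setD1 kim.
have v_neq_t k : k \in lt_ords n m -> v k != t.
  by move=> kP; move: (t_v k kP); rewrite hornerXsubC subr_eq0 eq_sym.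
exists (set_coord v im t); split; first exact: Q_step.
  move=> i j iP jP; rewrite /set_coord.
  have [-> | iim] := eqVneq i im; have [-> | jim] := eqVneq j im => //.
  - by move=> t_vj; move: (v_neq_t j (lt_m j jP jim)); rewrite t_vj eqxx.
  - by move=> vi_t; move: (v_neq_t i (lt_m i iP iim)); rewrite vi_t eqxx.
  - exact: inj_v (lt_m i iP iim) (lt_m j jP jim).
rewrite (big_setD1 im) ?inE //= /set_coord eqxx -(lt_ordsS_setD1 im) addr_eq0.
rewrite (eq_bigr v) // => k; rewrite inE => k_lt.
by rewrite ifN //; apply: contraTneq k_lt => ->; rewrite ltnn.
Qed.

Section Gram.
Variables (R : realFieldType) (n : nat).
Implicit Types (T : {set {perm 'I_n}}) (v : 'I_n -> R) (a : {ffun 'I_n -> R}).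

Definition hyp_perms a v : {set {perm 'I_n}} :=
  [set s : {perm 'I_n} | \sum_j a j * v (s j) == 0].

Definition gram T v : 'M[R]_n := \matrix_(i, j) \sum_(s in T) v (s i) * v (s j).

Lemma mulmx_gram T v (w : 'rV[R]_n) j :
  (w *m gram T v) 0 j = \sum_(s in T) (\sum_k w 0 k * v (s k)) * v (s j).
Proof.
rewrite mxE; under eq_bigr => k _ do rewrite mxE mulr_sumr.
rewrite exchange_big /=; apply: eq_bigr => s _.
by rewrite mulr_suml; apply: eq_bigr => k _; rewrite mulrA.
Qed.

Lemma det_gram_eq0P T v :
  reflect (exists2 a : {ffun 'I_n -> R}, a != 0 &
             forall s, s \in T -> \sum_j a j * v (s j) = 0)
          (\det (gram T v) == 0).
Proof.
apply: (iffP det0P) => [[w w_neq0 wG] | [a a_neq0 a_T]].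
  exists [ffun j => w 0 j].
    apply: contraNneq w_neq0 => /ffunP w0; apply/eqP/matrixP => i j.
    by move: (w0 j); rewrite [i]ord1 !ffunE mxE.
  have sq_sum : \sum_j (w *m gram T v) 0 j * w 0 j =
                \sum_(s in T) (\sum_k w 0 k * v (s k)) ^+ 2.
    under eq_bigr => j _ do rewrite mulmx_gram mulr_suml.
    rewrite exchange_big /=; apply: eq_bigr => s _; rewrite expr2 mulr_sumr.
    by apply: eq_bigr => i _; rewrite -mulrA [v _ * _]mulrC.
  have : \sum_(s in T) (\sum_k w 0 k * v (s k)) ^+ 2 == 0.
    by rewrite -sq_sum wG big1 // => j _; rewrite mxE mul0r.
  rewrite psumr_eq0 => [/allP all0 s sT | s _]; last exact: sqr_ge0.
  under eq_bigr => j _ do rewrite ffunE.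
  by move: (all0 s); rewrite mem_index_enum sT sqrf_eq0 => /(_ isT) /eqP.
exists (\row_j a j).
  apply: contraNneq a_neq0 => /matrixP w0; apply/eqP/ffunP => j.
  by move: (w0 0 j); rewrite !mxE ffunE.
apply/matrixP => i j; rewrite [i]ord1 mulmx_gram mxE big1 // => s sT.
by rewrite (eq_bigr (fun k => a k * v (s k))) => [|k _]; rewrite ?a_T ?mul0r ?mxE.
Qed.

Lemma gram_det_neq0_iff v :
  (forall T, ((n.-1)`! < #|T|)%N -> \det (gram T v) != 0) <->
  (forall a, a != 0 -> (#|hyp_perms a v| <= (n.-1)`!)%N).
Proof.
split => [gram_v a a_neq0 | hyp_v T T_gt].
  rewrite leqNgt; apply/negP => /gram_v /negP; apply; apply/det_gram_eq0P.
  by exists a => // s; rewrite inE => /eqP.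
apply/negP => /det_gram_eq0P [a a_neq0 a_T].
move: T_gt; rewrite ltnNge => /negP; apply; apply: leq_trans (hyp_v a a_neq0).
by apply/subset_leq_card/subsetP => s sT; rewrite inE a_T.
Qed.

Lemma card_hyp_perms_leq v : small_level_sets n v -> \sum_i v i != 0 ->
  forall a, a != 0 -> (#|hyp_perms a v| <= (n.-1)`!)%N.
Proof.
move=> small_v sum_v a a_neq0.
case: (boolP (nonconstant_on (lt_ords n n) a)) => [a_nc | /constant_onP a_cst].
  apply: leq_trans (small_v a 0 a_nc); apply/subset_leq_card/subsetP => s.
  rewrite /level_set lt_ordsT !inE => a_s; apply/andP; split; first exact/subsetP.
  by under eq_bigl => j do rewrite in_setT.
have [j0 a_j0] : exists j0, a j0 != 0.
  apply/existsP; apply: contraNT a_neq0 => /existsPn a0.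
  by apply/eqP/ffunP => j; rewrite ffunE; apply/eqP; move: (a0 j); rewrite negbK.
suff -> : hyp_perms a v = set0 by rewrite cards0.
apply/setP => s; rewrite !inE; apply/negbTE.
rewrite (eq_bigr (fun j => a j0 * v (s j))) => [|j _]; last first.
  by rewrite (a_cst j j0) ?lt_ordsT ?inE.
rewrite -mulr_sumr.
have -> : \sum_j v (s j) = \sum_j v j by rewrite [RHS](reindex_perm s).
by rewrite mulf_eq0 negb_or a_j0.
Qed.

End Gram.

Lemma prod_diff_neq0 (R : idomainType) n (v : 'I_n -> R) :
  \prod_(i : 'I_n) \prod_(j : 'I_n | (i < j)%N) (v i - v j) != 0 <-> injective v.
Proof.
split => [/prodf_neq0 v_neq i j vij | inj_v].
  have diff_neq0 (k l : 'I_n) : (k < l)%N -> v k != v l.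
    by move=> kl; move/prodf_neq0: (v_neq k isT) => /(_ l kl); rewrite subr_eq0.
  case: (ltngtP i j) => [ij | ji | /ord_inj //].
    by move: (diff_neq0 _ _ ij); rewrite vij eqxx.
  by move: (diff_neq0 _ _ ji); rewrite vij eqxx.
apply/prodf_neq0 => i _; apply/prodf_neq0 => j ij; rewrite subr_eq0.
by apply: contraTneq ij => /inj_v ->; rewrite ltnn.
Qed.

Section GenericPoly.
Variables (R : realFieldType) (n : nat).
Implicit Types (v : 'I_n -> R) (T : {set {perm 'I_n}}).

Definition gram_mpoly T : 'M[{mpoly R[n]}]_n :=
  \matrix_(i, j) \sum_(s in T) 'X_(s i) * 'X_(s j).

Definition generic_mpoly : {mpoly R[n]} :=
  (\sum_i 'X_i) * (\prod_(i : 'I_n) \prod_(j : 'I_n | (i < j)%N) ('X_i - 'X_j)) *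
  \prod_(T : {set {perm 'I_n}} | ((n.-1)`! < #|T|)%N) \det (gram_mpoly T).

Lemma meval_generic_mpoly v : generic_mpoly.@[v] =
  (\sum_i v i) * (\prod_(i : 'I_n) \prod_(j : 'I_n | (i < j)%N) (v i - v j)) *
  \prod_(T : {set {perm 'I_n}} | ((n.-1)`! < #|T|)%N) \det (gram T v).
Proof.
rewrite /generic_mpoly !mevalM rmorph_sum !rmorph_prod /=; congr (_ * _ * _).
- by apply: eq_bigr => i _; rewrite mevalXU.
- apply: eq_bigr => i _; rewrite rmorph_prod; apply: eq_bigr => j _.
  by rewrite rmorphB /= !mevalXU.
- apply: eq_bigr => T _; rewrite -det_map_mx; congr (\det _); apply/matrixP => i j.
  by rewrite !mxE rmorph_sum; apply: eq_bigr => s _; rewrite rmorphM /= !mevalXU.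
Qed.

Lemma generic_mpoly_neq0 v : generic_mpoly.@[v] != 0 <->
  [/\ \sum_i v i != 0, injective v &
      forall T, ((n.-1)`! < #|T|)%N -> \det (gram T v) != 0].
Proof.
rewrite meval_generic_mpoly !mulf_eq0 !negb_or -andbA.
split => [/and3P [sum_v /prod_diff_neq0 inj_v /prodf_neq0 gram_v] | [sum_v inj_v gram_v]].
  by split => // T; apply: gram_v.
by apply/and3P; split => //; [exact/prod_diff_neq0 | exact/prodf_neq0].
Qed.

End GenericPoly.

Section OrbitCount.
Variables (R : realFieldType) (n : nat).
Implicit Types (a v : {ffun 'I_n -> R}).

Lemma size_hyp_orbit a v :
  size [seq w <- orbit_seq v | in_hyperplane a w] = #|hyp_perms a v|.
Proof.
rewrite /orbit_seq /image_mem filter_map size_map cardE enumT /enum_mem.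
congr size; apply: eq_filter => s; rewrite !inE /in_hyperplane.
by under eq_bigr => j _ do rewrite ffunE.
Qed.

Lemma hyp_orbit_card_leq a v : (hyp_orbit_card a v <= #|hyp_perms a v|)%N.
Proof. by rewrite -size_hyp_orbit size_undup. Qed.

Lemma hyp_orbit_card_inj a v : injective v -> hyp_orbit_card a v = #|hyp_perms a v|.
Proof.
move=> inj_v; rewrite /hyp_orbit_card undup_id ?size_hyp_orbit // filter_uniq //.
rewrite map_inj_uniq ?enum_uniq // => s s' /ffunP e; apply/permP => i.
by apply: inj_v; move: (e i); rewrite !ffunE.
Qed.

Lemma exists_hyp_orbit_card_fact v : (1 < n)%N -> injective v -> \sum_i v i != 0 ->
  exists a, a != 0 /\ hyp_orbit_card a v = (n.-1)`!.
Proof.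
move=> n_gt1 inj_v sum_v.
have n_gt0 : (0 < n)%N := ltnW n_gt1.
have top_lt : (n.-1 < n)%N by rewrite ltn_predL.
pose top := Ordinal top_lt; pose S := \sum_i v i.
(* The hyperplane x_top * S = v_top * sum x. *)
pose a : {ffun 'I_n -> R} := [ffun j => (j == top)%:R - v top / S].
exists a; split.
  have bot_top : Ordinal n_gt0 != top by rewrite -val_eqE /= eq_sym -lt0n -subn1 subn_gt0.
  apply/eqP => /ffunP a0; move: (a0 top) (a0 (Ordinal n_gt0)).
  rewrite !ffunE eqxx (negbTE bot_top) sub0r => /eqP; rewrite subr_eq0 => /eqP <- /eqP.
  by rewrite oppr_eq0 oner_eq0.
rewrite hyp_orbit_card_inj // -[n in n.-1]card_ord -(card_perm_fix top).
apply: eq_card => s; rewrite !inE.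
have sum_vs : \sum_j v (s j) = S by rewrite [RHS](reindex_perm s).
have -> : \sum_j a j * v (s j) = v (s top) - v top.
  under eq_bigr => j _ do rewrite ffunE mulrBl.
  rewrite sumrB -mulr_sumr sum_vs divfK // (bigD1 top) //= eqxx mul1r.
  by rewrite big1 ?addr0 // => j /negbTE ->; rewrite mul0r.
by rewrite subr_eq0 (inj_eq inj_v).
Qed.

End OrbitCount.

Lemma exists_generic_point (R : realFieldType) n : (0 < n)%N ->
  exists v : {ffun 'I_n -> R}, (generic_mpoly R n).@[v] != 0.
Proof.
move=> n_gt0; have n_pos : (0 < n <= n)%N by rewrite n_gt0 leqnn.
have [v [small_v inj_v sum_v]] := exists_small_level_sets R n_pos.
exists [ffun i => v i]; rewrite (@meval_eq _ _ _ v) => [|i]; last by rewrite ffunE.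
have sum_all : \sum_i v i != 0.
  by rewrite (eq_bigl (fun i => i \in lt_ords n n)) // => i; rewrite inE ltn_ord.
apply/generic_mpoly_neq0; split => //.
  by move=> i j; apply: inj_v; rewrite inE ltn_ord.
exact/gram_det_neq0_iff/card_hyp_perms_leq.
Qed.

Theorem proposition1p6 (R : realType) (n : nat) (hn : (2 <= n)%N) :
  exists U : {ffun 'I_n -> R} -> Prop,
    zariski_open U /\ (exists v, U v) /\
    forall v, U v ->
      (exists a : {ffun 'I_n -> R}, a != 0 /\ hyp_orbit_card a v = (n.-1)`!) /\
      (forall a : {ffun 'I_n -> R}, a != 0 -> (hyp_orbit_card a v <= (n.-1)`!)%N).
Proof.
exists (fun v => (generic_mpoly R n).@[v] != 0); split; [|split].
- exists (fun p => p = generic_mpoly R n) => v.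
  by split => [vP | [p [-> //]]]; exists (generic_mpoly R n).
- exact: exists_generic_point (ltnW hn).
move=> v /generic_mpoly_neq0 [sum_v inj_v gram_v]; split.
  exact: exists_hyp_orbit_card_fact.
move=> a a_neq0; apply: leq_trans (hyp_orbit_card_leq a v) _.
exact: (gram_det_neq0_iff v).1.
Qed.
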